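(* Let $f:\mathbb{N}\to\mathbb{R}$ with $f(1)=1$ be multiplicative (i.e. $f(mn)=f(m)f(n)$ for coprime $m,n$), and suppose $f(p^k)=0$ for every prime $p$ and every integer $k\geq 2$. Assume there exist $C>0$ and $\gamma\in\mathbb{R}$ such that $|f(n)|\leq Cn^\gamma$ for all $n\geq2$. Then $$|f^{-1}(n)| \leq C^{\Omega(n)} n^{\gamma}, \quad n\geq2.$$
   Context: $f^{-1}$ denotes the Dirichlet inverse of $f$: the arithmetic function with $\sum_{d\mid n} f(n/d) f^{-1}(d)=\varepsilon(n)$ for all $n$, where $\varepsilon(1)=1$ and $\varepsilon(n)=0$ for $n\ge2$. $\Omega(n)$ is the number of prime factors of $n$ counted with multiplicity. *)

From HB Require Import structures.
From mathcomp Require Import all_boot all_order all_algebra.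
From mathcomp Require Import reals exp.
Set Implicit Arguments. Unset Strict Implicit. Unset Printing Implicit Defensive.
Import Order.TTheory GRing.Theory Num.Theory.
Local Open Scope ring_scope.

Definition bigOmega (n : nat) : nat := (\sum_(p <- primes n) logn p n)%N.

(* Arithmetic functions are f : nat -> R; only positive arguments matter. *)
Definition arith_multiplicative (R : realType) (f : nat -> R) : Prop :=
  f 1%N = 1 /\
  forall m n : nat, (0 < m)%N -> (0 < n)%N -> coprime m n -> f (m * n)%N = f m * f n.

Definition dirichlet_inverse (R : realType) (f g : nat -> R) : Prop :=
  forall n : nat, (0 < n)%N ->
    \sum_(d <- divisors n) f (n %/ d)%N * g d = (n == 1%N)%:R.

From HB Require Import structures.
From mathcomp Require Import all_boot all_order all_algebra.
From mathcomp Require Import reals exp.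
Set Implicit Arguments. Unset Strict Implicit. Unset Printing Implicit Defensive.
Import Order.TTheory GRing.Theory Num.Theory.

(* Since f vanishes on higher prime powers, its Dirichlet inverse is the
   completely multiplicative function h with h(p) = -f(p): the convolution
   f * h is multiplicative, and at p^k (k >= 1) only the terms
   f(p) h(p^(k-1)) + f(1) h(p^k) = (-f p)^(k-1) (f p - f p) survive.  Then
   |h(n)| = prod_p |f p|^(v_p n) <= prod_p (C p^gamma)^(v_p n) = C^Omega(n) n^gamma. *)

Lemma gcdn_coprime_mul a b d1 d2 :
  coprime a b -> d1 %| a -> d2 %| b -> gcdn a (d1 * d2) = d1.
Proof.
move=> cab d1a d2b; rewrite Gauss_gcdl; first exact/gcdn_idPr.
by rewrite (coprime_dvdr d2b).
Qed.

Lemma dvdn_mul_gcdn a b d :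
  coprime a b -> d %| a * b -> gcdn d a * gcdn d b = d.
Proof.
move=> cab dab; apply/eqP; rewrite eqn_dvd; apply/andP; split.
  rewrite Gauss_dvd ?dvdn_gcdl ?andbT //.
  by apply: (coprime_dvdl (dvdn_gcdr _ _)); apply: (coprime_dvdr (dvdn_gcdr _ _)).
have d_ab : d %| gcdn d a * b by rewrite muln_gcdl dvdn_gcd dab dvdn_mulr.
by rewrite muln_gcdr dvdn_gcd d_ab dvdn_mull.
Qed.

Lemma divisorsM a b : 0 < a -> 0 < b -> coprime a b ->
  perm_eq (divisors (a * b)) [seq d1 * d2 | d1 <- divisors a, d2 <- divisors b].
Proof.
move=> a_gt0 b_gt0 cab; have ab_gt0 : 0 < a * b by rewrite muln_gt0 a_gt0.
apply: uniq_perm; first exact: divisors_uniq.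
  apply: allpairs_uniq; rewrite ?divisors_uniq // => -[d1 d2] [e1 e2].
  move=> /allpairsP[[u1 u2] [/= + + [-> ->]]] /allpairsP[[v1 v2] [/= + + [-> ->]]].
  rewrite -!dvdn_divisors // => u1a u2b v1a v2b /= E.
  have cba : coprime b a by rewrite coprime_sym.
  have -> : u1 = v1 by rewrite -(gcdn_coprime_mul cab u1a u2b) E (gcdn_coprime_mul cab).
  by rewrite -(gcdn_coprime_mul cba u2b u1a) mulnC E mulnC (gcdn_coprime_mul cba).
move=> d; apply/idP/allpairsP => [|[[d1 d2] [/= d1a d2b ->]]].
  rewrite -dvdn_divisors // => dab.
  exists (gcdn d a, gcdn d b); rewrite -!dvdn_divisors ?dvdn_gcdr //.
  by rewrite dvdn_mul_gcdn.
by rewrite -dvdn_divisors // dvdn_mul // dvdn_divisors.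
Qed.

Lemma divisors_pfactor p k : prime p ->
  perm_eq (divisors (p ^ k)) [seq p ^ i | i <- iota 0 k.+1].
Proof.
move=> p_pr; apply: uniq_perm; first exact: divisors_uniq.
  by rewrite map_inj_uniq ?iota_uniq //; apply/expnI/prime_gt1.
move=> d; rewrite -dvdn_divisors ?expn_gt0 ?prime_gt0 //.
apply/(dvdn_pfactor _ _ p_pr)/mapP => -[i].
  by exists i; rewrite // mem_iota add0n ltnS.
by rewrite mem_iota add0n ltnS => /andP[_ ik] ->; exists i.
Qed.

Local Open Scope ring_scope.

Section DirichletConvolution.
Variable R : comPzRingType.
Implicit Types F G f g : nat -> R.

Definition coprime_multiplicative F := forall m n, (0 < m)%N -> (0 < n)%N ->
  coprime m n -> F (m * n)%N = F m * F n.

Definition dirichlet_conv F G n := \sum_(d <- divisors n) F (n %/ d)%N * G d.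

Lemma dirichlet_convM F G : coprime_multiplicative F ->
  coprime_multiplicative G -> coprime_multiplicative (dirichlet_conv F G).
Proof.
move=> mulF mulG a b a_gt0 b_gt0 cab.
rewrite /dirichlet_conv (perm_big _ (divisorsM a_gt0 b_gt0 cab)) /=.
rewrite big_allpairs_dep big_distrl; apply: eq_big_seq => d1.
rewrite -dvdn_divisors // => d1a; rewrite big_distrr; apply: eq_big_seq => d2.
rewrite -dvdn_divisors // => d2b.
have d1_gt0 : (0 < d1)%N := dvdn_gt0 a_gt0 d1a.
have d2_gt0 : (0 < d2)%N := dvdn_gt0 b_gt0 d2b.
have -> : ((a * b) %/ (d1 * d2) = (a %/ d1) * (b %/ d2))%N.
  by rewrite -{1}(divnK d1a) -{1}(divnK d2b) mulnACA mulnK // muln_gt0 d1_gt0.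
have q1_gt0 : (0 < a %/ d1)%N by rewrite divn_gt0 // dvdn_leq.
have q2_gt0 : (0 < b %/ d2)%N by rewrite divn_gt0 // dvdn_leq.
have cd : coprime d1 d2 := coprime_dvdl d1a (coprime_dvdr d2b cab).
have cq : coprime (a %/ d1) (b %/ d2).
  exact: coprime_dvdl (dvdn_div d1a) (coprime_dvdr (dvdn_div d2b) cab).
by rewrite mulF // mulG // mulrACA.
Qed.

Lemma dirichlet_conv_inv_uniq f g1 g2 : f 1%N = 1 ->
  (forall n, (0 < n)%N -> dirichlet_conv f g1 n = (n == 1)%:R) ->
  (forall n, (0 < n)%N -> dirichlet_conv f g2 n = (n == 1)%:R) ->
  forall n, (0 < n)%N -> g1 n = g2 n.
Proof.
move=> f1 inv_g1 inv_g2; elim/ltn_ind => n IHn n_gt0.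
have := inv_g1 n n_gt0; rewrite -(inv_g2 n n_gt0) /dirichlet_conv.
rewrite !(big_rem n (divisors_id n_gt0)) /= divnn n_gt0 f1 !mul1r.
rewrite (eq_big_seq (fun d => f (n %/ d)%N * g2 d)) => [/addIr //|d].
rewrite mem_rem_uniq ?divisors_uniq // inE -dvdn_divisors // => /andP[d_neq_n dn].
by rewrite IHn ?(dvdn_gt0 n_gt0) // ltn_neqAle d_neq_n dvdn_leq.
Qed.

Definition cmult_of_primes g n := \prod_(p <- primes n) g p ^+ logn p n.

Lemma cmult_of_primes_ord g n N : (0 < n)%N -> (n < N)%N ->
  cmult_of_primes g n = \prod_(p < N) g p ^+ logn p n.
Proof.
move=> n_gt0 nN; rewrite /cmult_of_primes -(filter_pi_of nN) big_filter.
rewrite big_mkcond big_mkord; apply: eq_bigr => p _; case: ifP => // p_n.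
have /negbT : ((p : nat) \in primes n) = false := p_n.
by rewrite -logn_gt0 lt0n negbK => /eqP ->.
Qed.

Lemma cmult_of_primes1 g : cmult_of_primes g 1 = 1.
Proof. by rewrite /cmult_of_primes big_nil. Qed.

Lemma cmult_of_primesM g m n : (0 < m)%N -> (0 < n)%N ->
  cmult_of_primes g (m * n) = cmult_of_primes g m * cmult_of_primes g n.
Proof.
move=> m_gt0 n_gt0; have mn_gt0 : (0 < m * n)%N by rewrite muln_gt0 m_gt0.
rewrite !(@cmult_of_primes_ord _ _ (m * n).+1) ?ltnS ?leq_pmulr ?leq_pmull //.
by rewrite -big_split; apply: eq_bigr => p _; rewrite lognM // exprD.
Qed.

Lemma cmult_of_primes_pfactor g p k : prime p ->
  cmult_of_primes g (p ^ k) = g p ^+ k.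
Proof.
move=> p_pr; elim: k => [|k IHk]; first by rewrite cmult_of_primes1.
rewrite expnS cmult_of_primesM ?expn_gt0 ?prime_gt0 // IHk exprS.
by rewrite /cmult_of_primes primes_prime // big_seq1 logn_prime // eqxx.
Qed.

Lemma dirichlet_conv_cmult_neg_pfactor f p k : f 1%N = 1 ->
  (forall j, (2 <= j)%N -> f (p ^ j)%N = 0) -> prime p ->
  dirichlet_conv f (cmult_of_primes (fun q => - f q)) (p ^ k.+1) = 0.
Proof.
move=> f1 f_pfactor p_pr; have p_gt0 := prime_gt0 p_pr.
rewrite /dirichlet_conv (perm_big _ (divisors_pfactor k.+1 p_pr)) big_map.
rewrite -/(index_iota 0 k.+2) big_mkord big_ord_recr big_ord_recr /= big1 => [|i _].
  rewrite -!expnB ?subnn ?subSnn // f1 !cmult_of_primes_pfactor // exprS.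
  by rewrite expn1 add0r mul1r mulNr addrN.
have ik := ltn_ord i; rewrite -expnB //; last by rewrite ltnW // ltnW.
by rewrite f_pfactor ?mul0r // ltn_subRL addn1 ltnS.
Qed.

Lemma cmult_of_primes_neg_dirichlet_inv f : f 1%N = 1 ->
  coprime_multiplicative f ->
  (forall p k, prime p -> (2 <= k)%N -> f (p ^ k)%N = 0) ->
  forall n, (0 < n)%N ->
    dirichlet_conv f (cmult_of_primes (fun p => - f p)) n = (n == 1)%:R.
Proof.
move=> f1 mulf f_pfactor n n_gt0; have [n_le1|n_gt1] := leqP n 1.
  have -> : n = 1%N by apply/eqP; rewrite eqn_leq n_le1.
  by rewrite /dirichlet_conv big_seq1 divnn f1 cmult_of_primes1 mulr1.
have p_pr := pdiv_prime n_gt1; set p := pdiv n in p_pr *.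
have [m cpm def_n] := pfactor_coprime p_pr n_gt0.
have m_gt0 : (0 < m)%N by move: n_gt0; rewrite def_n muln_gt0 => /andP[].
have /prednK def_k : (0 < logn p n)%N.
  by rewrite logn_gt0 mem_primes p_pr n_gt0 pdiv_dvd.
rewrite gtn_eqF // def_n mulnC dirichlet_convM ?expn_gt0 ?(prime_gt0 p_pr) //.
- by rewrite -def_k dirichlet_conv_cmult_neg_pfactor ?mul0r // => j; apply: f_pfactor.
- by move=> a b a_gt0 b_gt0 _; apply: cmult_of_primesM.
- by rewrite coprimeXl.
Qed.

End DirichletConvolution.

Lemma natr_prod_primes (R : pzSemiRingType) n : (0 < n)%N ->
  n%:R = \prod_(p <- primes n) (p%:R : R) ^+ logn p n.
Proof.
move=> n_gt0; rewrite {1}(prod_prime_decomp n_gt0) prime_decompE big_map natr_prod.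
by apply: eq_bigr => p _; rewrite natrX.
Qed.

Section PowerBound.
Variable R : realType.

Lemma powR_prod (I : Type) (s : seq I) (x : I -> R) a :
  (forall i, 0 <= x i) -> (\prod_(i <- s) x i) `^ a = \prod_(i <- s) x i `^ a.
Proof.
move=> x_ge0; elim: s => [|i s IHs]; first by rewrite !big_nil powR1.
by rewrite !big_cons powRM ?IHs ?prodr_ge0.
Qed.

Lemma norm_cmult_of_primes_le (g : nat -> R) C gamma : 0 <= C ->
  (forall p, prime p -> `|g p| <= C * p%:R `^ gamma) ->
  forall n, (0 < n)%N -> `|cmult_of_primes g n| <= C ^+ bigOmega n * n%:R `^ gamma.
Proof.
move=> C_ge0 g_le n n_gt0.
rewrite /cmult_of_primes normr_prod (natr_prod_primes R n_gt0).
rewrite powR_prod => [|p]; last by rewrite exprn_ge0.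
rewrite /bigOmega -prodrXr -big_split /= big_seq [leRHS]big_seq.
apply: ler_prod => p; rewrite mem_primes => /andP[p_pr _].
have -> : (p%:R ^+ logn p n) `^ gamma = (p%:R `^ gamma) ^+ logn p n.
  by rewrite -powR_mulrn // powRAC powR_mulrn ?powR_ge0.
rewrite normr_ge0 normrX -exprMn /=; apply: lerXn2r; rewrite ?nnegrE //.
  by rewrite mulr_ge0 ?powR_ge0.
by rewrite g_le.
Qed.

End PowerBound.

Theorem proposition3p5 (R : realType) (f finv : nat -> R) (C gamma : R) :
  arith_multiplicative f ->
  (forall (p k : nat), prime p -> (2 <= k)%N -> f (p ^ k)%N = 0) ->
  0 < C ->
  (forall n : nat, (2 <= n)%N -> `|f n| <= C * (n%:R) `^ gamma) ->
  dirichlet_inverse f finv ->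
  forall n : nat, (2 <= n)%N -> `|finv n| <= C ^+ bigOmega n * (n%:R) `^ gamma.
Proof.
move=> [f1 mulf] f_pfactor C_gt0 f_le finv_inv n n_ge2.
have n_gt0 : (0 < n)%N := ltnW n_ge2.
have h_inv := cmult_of_primes_neg_dirichlet_inv f1 mulf f_pfactor.
rewrite (dirichlet_conv_inv_uniq f1 finv_inv h_inv) //.
apply: norm_cmult_of_primes_le => // [|p p_pr]; first exact: ltW.
by rewrite normrN f_le ?prime_gt1.
Qed.
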